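(* Let $\mathbf L=(L,\vee,\wedge,0,1)$ be a complemented lattice with $0\ne1$ and $D$ a compatible deductive system of $\mathbf L$. Then: (i) $\Theta(D)$ is an equivalence relation on $L$ having the Substitution Property with respect to $\to$; (ii) $[1]\big(\Theta(D)\big)=D$.
   Context: For $a\in L$, $a^+:=\{x\in L\mid a\vee x=1,\ a\wedge x=0\}$ (the set of all complements of $a$), and $a\to b:=\{x\vee(a\wedge b)\mid x\in a^+\}$; for $A\subseteq L$, $a\to A:=\bigcup_{y\in A}(a\to y)$. A deductive system of $\mathbf L$ is a subset $D\subseteq L$ such that $1\in D$, and whenever $a\in D$, $b\in L$ and $a\to b\subseteq D$, then $b\in D$. A deductive system $D$ is compatible if for all $a,b,c,d\in L$: (1) if $a\to b\subseteq D$ and $x\to(c\to d)\subseteq D$ for all $x\in a\to b$, then $c\to d\subseteq D$; (2) if $a\to b\subseteq D$ and $b\to a\subseteq D$, then $x\to(b\to c)\subseteq D$ for all $x\in a\to c$. $\Theta(D):=\{(x,y)\in L^2\mid x\to y\subseteq D\text{ and }y\to x\subseteq D\}$. An equivalence relation $\Phi$ on $L$ has the Substitution Property with respect to $\to$ if $(a,b)\in\Phi$ implies $(a\to c)\times(b\to c)\subseteq\Phi$ for all $c\in L$. $[1]\Phi$ is the $\Phi$-class of $1$. *)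

From HB Require Import structures.
From mathcomp Require Import all_boot all_order.
Set Implicit Arguments. Unset Strict Implicit. Unset Printing Implicit Defensive.
Import Order.TTheory.
Local Open Scope order_scope.

Section Defs.
Context {disp : Order.disp_t} {L : tbLatticeType disp}.

Definition compls (a : L) : L -> Prop := fun x => (a `|` x = \top) /\ (a `&` x = \bot).

(* a -> b := { x \/ (a /\ b) | x in a^+ } *)
Definition arr (a b : L) : L -> Prop :=
  fun z => exists x, compls a x /\ z = x `|` (a `&` b).

Definition arrS (a : L) (A : L -> Prop) : L -> Prop :=
  fun z => exists y, A y /\ arr a y z.

Definition subset (A B : L -> Prop) : Prop := forall x, A x -> B x.

Definition complemented : Prop := forall a : L, exists x, compls a x.

Definition deductive_system (D : L -> Prop) : Prop :=
  D \top /\ forall a b : L, D a -> subset (arr a b) D -> D b.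

Definition compatible (D : L -> Prop) : Prop :=
  deductive_system D /\
  (forall a b c d : L, subset (arr a b) D ->
     (forall x, arr a b x -> subset (arrS x (arr c d)) D) ->
     subset (arr c d) D) /\
  (forall a b c : L, subset (arr a b) D -> subset (arr b a) D ->
     forall x, arr a c x -> subset (arrS x (arr b c)) D).

Definition ThetaD (D : L -> Prop) : L -> L -> Prop :=
  fun x y => subset (arr x y) D /\ subset (arr y x) D.

Definition equiv_relP (R : L -> L -> Prop) : Prop :=
  (forall x, R x x) /\ (forall x y, R x y -> R y x) /\
  (forall x y z, R x y -> R y z -> R x z).

Definition substitution_arr (R : L -> L -> Prop) : Prop :=
  forall a b c : L, R a b -> forall u v, arr a c u -> arr b c v -> R u v.

Definition class_top (R : L -> L -> Prop) : L -> Prop := fun x => R x \top.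

End Defs.

From Pilot Require Import Defs.
From HB Require Import structures.
From mathcomp Require Import all_boot all_order.
Set Implicit Arguments. Unset Strict Implicit.
Import Order.TTheory.
Local Open Scope order_scope.

(* Since [1 -> x = {x}] and [x -> x = x -> 1 = {1}], the relation
   [Theta(D)] is reflexive and its class of [1] is [D].  Compatibility (2)
   says that [a -> c] "implies" [b -> c] whenever [a Theta(D) b]; feeding
   this into the cut rule (1) gives transitivity, and applying it in both
   directions gives the substitution property. *)

Section Implication.
Context {disp : Order.disp_t} {L : tbLatticeType disp}.
Implicit Types x z : L.

Lemma arrx1 x z : arr x \top z -> z = \top.
Proof. by move=> [c [[x_c _] ->]]; rewrite meetx1 joinC. Qed.

Lemma arrxx x z : arr x x z -> z = \top.
Proof. by move=> [c [[x_c _] ->]]; rewrite meetxx joinC. Qed.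

Lemma arr1x x z : arr \top x z <-> z = x.
Proof.
split=> [[c [[_ top_c] ->]] | ->].
  by move: top_c; rewrite meet1x => ->; rewrite meet1x join0x.
exists \bot; split; last by rewrite meet1x join0x.
by split; [rewrite joinx0 | rewrite meetx0].
Qed.

Lemma ThetaD_refl (D : L -> Prop) x : D \top -> ThetaD D x x.
Proof. by move=> D1; split=> z /arrxx ->. Qed.

Lemma ThetaD_sym (D : L -> Prop) x z : ThetaD D x z -> ThetaD D z x.
Proof. by case. Qed.

Lemma class_top_ThetaD (D : L -> Prop) :
  deductive_system D -> forall x, class_top (ThetaD D) x <-> D x.
Proof.
move=> [D1 _] x; split=> [[_ D_1x] | Dx].
  exact/D_1x/arr1x.
by split=> z; [move/arrx1 -> | move/arr1x ->].
Qed.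

Section Compatible.
Variable D : L -> Prop.
Hypothesis hD : compatible D.

Lemma ThetaD_arr_subst a b c u :
  ThetaD D a b -> arr a c u -> Defs.subset (arrS u (arr b c)) D.
Proof. have [_ [_ C2]] := hD; case=> ab ba; exact: C2 ab ba u. Qed.

Lemma ThetaD_arr_trans x y z :
  ThetaD D x y -> Defs.subset (arr y z) D -> Defs.subset (arr x z) D.
Proof.
have [_ [C1 _]] := hD; move=> xy yz.
by apply: (C1 y z) => // w; exact: ThetaD_arr_subst (ThetaD_sym xy).
Qed.

Lemma ThetaD_trans x y z : ThetaD D x y -> ThetaD D y z -> ThetaD D x z.
Proof.
move=> xy yz; split; first by apply: ThetaD_arr_trans xy _; case: yz.
by apply: ThetaD_arr_trans (ThetaD_sym yz) _; case: xy.
Qed.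

Lemma ThetaD_substitution : substitution_arr (ThetaD D).
Proof.
move=> a b c ab u v acu bcv; split=> z uz.
  by apply: (ThetaD_arr_subst ab acu); exists v.
by apply: (ThetaD_arr_subst (ThetaD_sym ab) bcv); exists u.
Qed.

End Compatible.
End Implication.

Theorem theorem7 (disp : Order.disp_t) (L : tbLatticeType disp)
  (hcomp : @complemented disp L) (h01 : (\bot : L) <> \top)
  (D : L -> Prop) (hD : compatible D) :
  (equiv_relP (ThetaD D) /\ substitution_arr (ThetaD D)) /\
  (forall x : L, class_top (ThetaD D) x <-> D x).
Proof.
have [[D1 _] _] := hD.
split; last exact/class_top_ThetaD/hD.1.
split; last exact: ThetaD_substitution.
split; first by move=> x; exact: ThetaD_refl.
split; first by move=> x y; exact: ThetaD_sym.
by move=> x y z; exact: ThetaD_trans.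
Qed.
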